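(* Let $n\ge 2$, $N=\{1,\dots,n\}$, for each $i\in N$ let $A_i$ be a nonempty finite set, $A=\prod_{i\in N}A_i$, $u_i:A\to\mathbb{R}$, $u(a)=(u_i(a))_{i\in N}$. Let $V=\operatorname{co}\{u(a):a\in A\}$ and $F^*=\prod_{i\in N}\left[\min_{a\in A}u_i(a),\ \max_{a\in A}u_i(a)\right]$. (1) If $V\neq F^*$, then for all $\delta,\delta'\in(0,1]$ and $T,T'\in\mathbb{N}$ with $\delta^T<(\delta')^{T'}$, we have $F(\delta',T')\subsetneq F(\delta,T)$. (2) If $V=F^*$, then $F(\delta,T)=V$ for all $\delta\in(0,1]$ and $T\in\mathbb{N}$.
   Context: $\operatorname{co}$ denotes convex hull. For $\delta\in(0,1]$, $T\in\mathbb{N}$ and $a^{[nT]}=(a^1,\dots,a^{nT})\in A^{nT}$, extend indices by $a^s=a^{s-nT}$ for $s\ge nT+1$, set $U_i(a^{[nT]})=\frac{1}{\sum_{k=1}^{nT}\delta^{k-1}}\sum_{k=1}^{nT}\delta^{k-1}u_i(a^{(i-1)T+k})$, $U=(U_i)_{i\in N}$, and $F(\delta,T)=\operatorname{co}\left(\bigcup_{a^{[nT]}\in A^{nT}}\{U(a^{[nT]})\}\right)$. (The paper writes $F(\Delta)$ for $F(\delta,T)$ with $\Delta=\delta^T$.) *)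

From HB Require Import structures.
From mathcomp Require Import all_boot all_order all_algebra.
From mathcomp Require Import boolp classical_sets reals.
Set Implicit Arguments. Unset Strict Implicit. Unset Printing Implicit Defensive.
Import Order.TTheory GRing.Theory Num.Theory.
Local Open Scope ring_scope.
Local Open Scope classical_set_scope.

(* Players are 'I_n (player i+1 of the paper is i : 'I_n, 0-based).
   A profile (element of A = prod_i A_i) is a dependent finite function. *)
Definition prof (n : nat) (A : 'I_n -> finType) := {dffun forall i : 'I_n, A i}.

Definition co (R : realType) (n : nat) (S : set ('I_n -> R)) : set ('I_n -> R) :=
  [set x | exists (m : nat) (w : 'I_m -> R) (p : 'I_m -> ('I_n -> R)),
     (forall k, 0 <= w k) /\ \sum_(k < m) w k = 1 /\ (forall k, S (p k)) /\
     x = (fun i => \sum_(k < m) w k * p k i)].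

Lemma ord_pos m (k : 'I_m) : (0 < m)%N.
Proof. by apply: leq_ltn_trans (ltn_ord k). Qed.

(* index s (0-based), taken modulo m: periodic extension a^s = a^{s-m} *)
Definition cyc_idx m (k : 'I_m) (s : nat) : 'I_m := Ordinal (ltn_pmod s (ord_pos k)).

(* U_i(a^{[nT]}), with 0-based i and k:  a^{(i-1)T+k} (1-based) = a_{(i*T + k) mod nT} (0-based) *)
Definition Ui (R : realType) n (A : 'I_n -> finType) (u : 'I_n -> prof A -> R)
  (delta : R) (T : nat) (a : 'I_(n * T) -> prof A) (i : 'I_n) : R :=
  (\sum_(k < n * T) delta ^+ k * u i (a (cyc_idx k (i * T + k)%N)))
  / (\sum_(k < n * T) delta ^+ k).

Definition F (R : realType) n (A : 'I_n -> finType) (u : 'I_n -> prof A -> R)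
  (delta : R) (T : nat) : set ('I_n -> R) :=
  co [set Ui u delta a | a in [set: 'I_(n * T) -> prof A]].

Definition V (R : realType) n (A : 'I_n -> finType) (u : 'I_n -> prof A -> R) :
  set ('I_n -> R) := co [set (fun i => u i a) | a in [set: prof A]].

(* F^* = prod_i [min_a u_i(a), max_a u_i(a)] (A finite, nonempty: min/max attained) *)
Definition Fstar (R : realType) n (A : 'I_n -> finType) (u : 'I_n -> prof A -> R) :
  set ('I_n -> R) :=
  [set x | forall i, (exists a, u i a <= x i) /\ (exists b, x i <= u i b)].

From HB Require Import structures.
From mathcomp Require Import all_boot all_order all_algebra.
From mathcomp Require Import boolp classical_sets reals.
From mathcomp Require Import ring lra.
Set Implicit Arguments.
Unset Strict Implicit.
Unset Printing Implicit Defensive.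
Import Order.TTheory GRing.Theory Num.Theory.
Local Open Scope ring_scope.
Local Open Scope classical_set_scope.

(* Write D = delta^T.  Cutting the cycle of length nT into n blocks of length T,
   the payoff of player i is sum_l w_D(l) * (average payoff in block i + l), where
   w_D(l) = D^l / sum_l' D^l' are geometric weights indexed by Z/nZ.  If D < D', then
   w_D' is a convex combination of the cyclic rotations of w_D, which turns every
   payoff vector of F(delta',T') into a convex combination of payoff vectors of
   block-constant sequences, all of which lie in F(delta,T).

   Conversely, if F(delta,T) were contained in F(delta',T'), the support functions
   of the two polytopes would agree; by the same convex combination this forces, for
   every direction mu, one profile maximising simultaneously the n tilted functionals
   sum_i w_D(k - i) mu_i u_i.  Tilting a direction with prescribed signs and a unique
   maximiser m times towards player k keeps that maximiser (by a perturbation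
   argument), and as m grows player k's weight dominates: the maximiser maximises or
   minimises u_k according to the sign.  So every corner of F* is a pure payoff
   vector and F* = V.  Part (2) is the sandwich V <= F(delta,T) <= F* = V. *)

(** * Convex combinations and convex hulls *)

Section ConvexCombinations.
Variable R : realFieldType.

Lemma convex_comb_le (I : finType) (w f : I -> R) C :
  (forall k, 0 <= w k) -> \sum_k w k = 1 -> (forall k, f k <= C) ->
  \sum_k w k * f k <= C.
Proof.
move=> w_ge0 w_sum1 f_le; rewrite -[leRHS]mul1r -w_sum1 mulr_suml.
by apply: ler_sum => k _; apply: ler_wpM2l.
Qed.

Lemma convex_comb_ge (I : finType) (w f : I -> R) C :
  (forall k, 0 <= w k) -> \sum_k w k = 1 -> (forall k, C <= f k) ->
  C <= \sum_k w k * f k.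
Proof.
move=> w_ge0 w_sum1 f_ge; rewrite -[leLHS]mul1r -w_sum1 mulr_suml.
by apply: ler_sum => k _; apply: ler_wpM2l.
Qed.

Lemma segment_param (m M x : R) : m <= x -> x <= M ->
  exists2 t, 0 <= t <= 1 & x = t * M + (1 - t) * m.
Proof.
move=> mx xM; have [eMm|neMm] := eqVneq M m.
  exists 1; first by rewrite ler01 lexx.
  by apply/eqP; rewrite subrr mul0r addr0 mul1r eq_le xM eMm mx.
have Mm_gt0 : 0 < M - m by rewrite lt_def subr_eq0 neMm subr_ge0 (le_trans mx xM).
exists ((x - m) / (M - m)); last by field; rewrite gt_eqF.
apply/andP; split; first by apply: divr_ge0; [rewrite subr_ge0 | apply: ltW].
by rewrite ler_pdivrMr // mul1r lerD2r.
Qed.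

End ConvexCombinations.

Section ConvexHull.
Variables (R : realType) (n : nat).
Implicit Types S : set ('I_n -> R).

Lemma co_fin S (I : finType) (w : I -> R) (p : I -> 'I_n -> R) :
  (forall k, 0 <= w k) -> \sum_k w k = 1 -> (forall k, S (p k)) ->
  co S (fun i => \sum_k w k * p k i).
Proof.
move=> w_ge0 w_sum1 pS; have e := onW_bij predT (enum_val_bij I).
exists #|I|, (w \o enum_val), (p \o enum_val); do !split => //=.
- by rewrite -w_sum1 [RHS](reindex _ e).
- by apply: funext => i; rewrite [LHS](reindex _ e).
Qed.

Lemma sub_co S : S `<=` co S.
Proof.
move=> x Sx; exists 1%N, (fun=> 1), (fun=> x); rewrite big_ord1.
by do !split => //; apply: funext => i; rewrite big_ord1 mul1r.
Qed.

Lemma co_convex S (I : finType) (w : I -> R) (p : I -> 'I_n -> R) :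
  (forall k, 0 <= w k) -> \sum_k w k = 1 -> (forall k, co S (p k)) ->
  co S (fun i => \sum_k w k * p k i).
Proof.
move=> w_ge0 w_sum1 coS.
pose comb m := (('I_m -> R) * ('I_m -> 'I_n -> R))%type.
pose repr k (r : {m : nat & comb m}) := let: existT m (v, q) := r in
  [/\ forall j, 0 <= v j, \sum_j v j = 1, forall j, S (q j)
    & p k = (fun i => \sum_j v j * q j i)].
have [r hr] : {r & forall k, repr k (r k)}.
  apply: choice => k; have [m [v [q hvq]]] := coS k.
  by exists (existT _ m (v, q)); case: hvq => ? [? [? ?]].
pose v k := (projT2 (r k)).1; pose q k := (projT2 (r k)).2.
have {}hr k : [/\ forall j, 0 <= v k j, \sum_j v k j = 1, forall j, S (q k j)
    & p k = (fun i => \sum_j v k j * q k j i)].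
  by rewrite /v /q; case: (r k) (hr k) => m [].
have -> : (fun i => \sum_k w k * p k i) = (fun i =>
    \sum_(z : {k : I & 'I_(projT1 (r k))}) w (tag z) * v _ (tagged z) * q _ (tagged z) i).
  apply: funext => i; rewrite -(sig_big_dep xpredT (fun=> xpredT)
    (fun k (j : 'I_(projT1 (r k))) => w k * v k j * q k j i)) /=.
  apply: eq_bigr => k _; have [_ _ _ ->] := hr k.
  by rewrite mulr_sumr; apply: eq_bigr => j _; rewrite mulrA.
apply: co_fin => [z||z]; last by have [_ _ qS _] := hr (tag z).
- by have [v_ge0 _ _ _] := hr (tag z); rewrite mulr_ge0.
- rewrite -(sig_big_dep xpredT (fun=> xpredT)
    (fun k (j : 'I_(projT1 (r k))) => w k * v k j)) /= -{}w_sum1.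
  by apply: eq_bigr => k _; have [_ v_sum1 _ _] := hr k; rewrite -mulr_sumr v_sum1 mulr1.
Qed.

Lemma co_sub_co S S' : S `<=` co S' -> co S `<=` co S'.
Proof.
by move=> sub _ [m [w [p [w_ge0 [w_sum1 [pS ->]]]]]]; apply: co_convex => // k; apply: sub.
Qed.

Lemma co_le_linear S (mu : 'I_n -> R) C x :
  (forall p, S p -> \sum_i mu i * p i <= C) -> co S x -> \sum_i mu i * x i <= C.
Proof.
move=> bound [m [w [p [w_ge0 [w_sum1 [pS ->]]]]]].
under eq_bigr do rewrite mulr_sumr; rewrite exchange_big /=.
under eq_bigr do under eq_bigr do rewrite mulrCA; under eq_bigr do rewrite -mulr_sumr.
by apply: convex_comb_le => // k; apply: bound.
Qed.

End ConvexHull.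

Section FfunMarginals.
Variables (R : comPzRingType) (I J : finType) (q : I -> J -> R).
Hypothesis q_sum1 : forall i, \sum_j q i j = 1.

Lemma sum_ffun_prod1 : \sum_(f : {ffun I -> J}) \prod_i q i (f i) = 1.
Proof. by rewrite -(@bigA_distr_bigA R 0 1 *%R +%R) big1. Qed.

Lemma sum_ffun_prod_marginal (F : J -> R) i0 :
  \sum_(f : {ffun I -> J}) (\prod_i q i (f i)) * F (f i0) = \sum_j q i0 j * F j.
Proof.
pose q' i j := if i == i0 then q i j * F j else q i j.
have := @bigA_distr_bigA R 0 1 *%R +%R I J q'.
have others : \prod_(i | i != i0) \sum_j q' i j = 1.
  by apply: big1 => i /negbTE i_ne; rewrite /q' i_ne q_sum1.
rewrite (bigD1 i0) //= others /q' eqxx mulr1 => ->; apply: eq_bigr => f _.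
rewrite (bigD1 i0) //= [in RHS](bigD1 i0) //= eqxx mulrAC; congr (_ * _).
by apply: eq_bigr => i /negbTE ->.
Qed.

End FfunMarginals.

Section BlockPositions.
Variables m T : nat.

Lemma blk_pos_subproof (j : 'I_m) (r : 'I_T) : (j * T + r < m * T)%N.
Proof.
by apply: leq_trans (leq_mul (ltn_ord j) (leqnn T)); rewrite mulSn addnC ltn_add2r.
Qed.

Definition blk_pos j r : 'I_(m * T) := Ordinal (blk_pos_subproof j r).

Lemma blk_T_gt0 (k : 'I_(m * T)) : (0 < T)%N.
Proof. by case: T k => [|//] []; rewrite muln0. Qed.

Lemma blk_idx_subproof (k : 'I_(m * T)) : (k %/ T < m)%N.
Proof. by rewrite ltn_divLR ?(blk_T_gt0 k). Qed.

Definition blk_idx k : 'I_m := Ordinal (blk_idx_subproof k).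
Definition blk_off (k : 'I_(m * T)) : 'I_T := Ordinal (ltn_pmod k (blk_T_gt0 k)).

Lemma blk_idx_pos j r : blk_idx (blk_pos j r) = j.
Proof.
by apply: val_inj; rewrite /= divnMDl ?(blk_T_gt0 (blk_pos j r)) // divn_small ?addn0.
Qed.

Lemma blk_pos_bij : bijective (fun p : 'I_m * 'I_T => blk_pos p.1 p.2).
Proof.
exists (fun k => (blk_idx k, blk_off k)) => [[j r]|k]; last first.
  by apply: val_inj; rewrite /= -divn_eq.
rewrite /= blk_idx_pos; congr (_, _); apply: val_inj.
by rewrite /= modnMDl modn_small.
Qed.

Lemma big_blk_pos (V : nmodType) (F : 'I_(m * T) -> V) :
  \sum_k F k = \sum_(j < m) \sum_(r < T) F (blk_pos j r).
Proof. by rewrite pair_bigA /= (reindex _ (onW_bij _ blk_pos_bij)). Qed.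

End BlockPositions.
Arguments blk_idx {m T}.

(** * Geometric weights on Z/nZ *)

Section GeometricWeights.
Variable R : realFieldType.
Implicit Types D : R.

Definition geow D m (l : nat) := D ^+ l / \sum_(l' < m) D ^+ l'.

Lemma geom_sum_gt0 D m : 0 < D -> (0 < m)%N -> 0 < \sum_(l < m) D ^+ l.
Proof.
move=> D_gt0; case: m => // m _; rewrite big_ord_recl expr0 (lt_le_trans ltr01) //.
by rewrite lerDl sumr_ge0 // => l _; rewrite exprn_ge0 // ltW.
Qed.

Lemma geow_gt0 D m l : 0 < D -> (0 < m)%N -> 0 < geow D m l.
Proof. by move=> D_gt0 m_gt0; rewrite divr_gt0 ?exprn_gt0 ?geom_sum_gt0. Qed.

Lemma geow_sum1 D m : 0 < D -> (0 < m)%N -> \sum_(l < m) geow D m l = 1.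
Proof. by move=> D_gt0 m_gt0; rewrite -mulr_suml divff // gt_eqF ?geom_sum_gt0. Qed.

Lemma geow_le D m l : 0 < D <= 1 -> (0 < l)%N -> geow D m l <= D * geow D m 0.
Proof.
case/andP=> D_gt0 D_le1; case: l => // l _.
rewrite /geow expr0 mul1r ler_wpM2r //.
  by rewrite invr_ge0 sumr_ge0 // => k _; rewrite exprn_ge0 // ltW.
have D_ge0 := ltW D_gt0.
by rewrite exprSr mulrC ler_piMr // ?exprn_ge0 // exprn_ile1.
Qed.

End GeometricWeights.

Lemma val_subZp1 N (j : 'I_N.+1) : val (j - Zp1) = if j == 0 then N else j.-1.
Proof.
case: j => j lt_j; rewrite /= -[_ == _]/(j == 0)%N.
case: N lt_j => [|N] lt_j; first by case: j lt_j.
rewrite (modn_small (_ : 1 < N.+2)%N) // subn1 /= (modn_small (ltnSn N.+1)).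
case: j lt_j => [|j] lt_j; first by rewrite add0n modn_small.
by rewrite addSnnS modnDr modn_small // ltnW.
Qed.

Lemma sumr_shift (V : nmodType) N (F : 'I_N.+1 -> V) s :
  \sum_l F l = \sum_l F (l + s).
Proof. exact: reindex_inj (addIr s). Qed.

Lemma cyclic_deconv (R : comPzRingType) N (D : R) (x : 'I_N.+1 -> R) (l : 'I_N.+1) :
  \sum_s (x s - D * x (s - Zp1)) * D ^+ (l - s)%R = (1 - D ^+ N.+1) * x l.
Proof.
have step (j : 'I_N.+1) :
    D ^+ j - D * D ^+ (j - Zp1)%R = (j == 0)%:R * (1 - D ^+ N.+1).
  rewrite val_subZp1; case: eqP => [->|]; first by rewrite /= expr0 -exprS mul1r.
  case: j => -[|j] lt_j j_ne0; first by case: j_ne0; apply: val_inj.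
  by rewrite /= -exprS subrr mul0r.
under eq_bigr do rewrite mulrBl; rewrite sumrB [X in _ - X](sumr_shift _ Zp1).
under [X in _ - X]eq_bigr do rewrite addrK opprD addrA -mulrA mulrCA.
rewrite -sumrB; under eq_bigr do rewrite -mulrBr step.
rewrite (bigD1 l) //= subrr eqxx mul1r big1 ?addr0 1?mulrC // => s /negbTE.
by rewrite subr_eq0 eq_sym => ->; rewrite mul0r mulr0.
Qed.

Lemma geow_rot_comb (R : realFieldType) N (D D' : R) : 0 < D -> D < D' -> D' <= 1 ->
  exists p : 'I_N.+1 -> R, [/\ forall s, 0 < p s, \sum_s p s = 1 &
    forall l : 'I_N.+1, geow D' N.+1 l = \sum_s p s * geow D N.+1 (l - s)%R].
Proof.
move=> D_gt0 lt_DD' D'_le1; have D'_gt0 := lt_trans D_gt0 lt_DD'.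
pose x (l : 'I_N.+1) := D' ^+ l.
pose S := \sum_(l < N.+1) D ^+ l; pose S' := \sum_(l < N.+1) D' ^+ l.
have S_gt0 : 0 < S by apply: geom_sum_gt0.
have S'_gt0 : 0 < S' by apply: geom_sum_gt0.
have D_lt1 : 0 < 1 - D by rewrite subr_gt0 (lt_le_trans lt_DD').
have geomE : 1 - D ^+ N.+1 = (1 - D) * S by rewrite -opprB subrX1 -mulNr opprB.
(* Filtering by 1 - D * shift inverts the cyclic convolution with D-powers. *)
pose p s := (x s - D * x (s - Zp1)) / ((1 - D) * S').
have comb (l : 'I_N.+1) : geow D' N.+1 l = \sum_s p s * geow D N.+1 (l - s)%R.
  transitivity ((1 - D ^+ N.+1) * x l / ((1 - D) * S' * S)).
    by rewrite geomE /geow -/S' /x; field; rewrite !gt_eqF.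
  rewrite -cyclic_deconv mulr_suml; apply: eq_bigr => s _.
  by rewrite /p /geow -/S; field; rewrite !gt_eqF.
exists p; split=> // [s|].
  have x_pred : D' * x (s - Zp1) <= x s.
    rewrite /x val_subZp1; case: eqP => [->|].
      by rewrite -exprS expr0 exprn_ile1 // ltW.
    by case: s => -[|s] lt_s s_ne0 //=; [case: s_ne0; apply: val_inj | rewrite -exprS].
  have x_gt0 : 0 < x (s - Zp1) by apply: exprn_gt0.
  rewrite divr_gt0 ?mulr_gt0 // subr_gt0 (lt_le_trans _ x_pred) //.
  by rewrite ltr_pM2r.
have := geow_sum1 D'_gt0 (ltn0Sn N).
rewrite (eq_bigr _ (fun (l : 'I_N.+1) _ => comb l)) exchange_big => <-.
apply: eq_bigr => s _.
rewrite -mulr_sumr (sumr_shift _ s); under eq_bigr do rewrite addrK.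
by rewrite geow_sum1 ?mulr1.
Qed.

Lemma bernoulli_ineq (R : realFieldType) (h : R) m : 0 <= h -> 1 + m%:R * h <= (1 + h) ^+ m.
Proof.
move=> h_ge0; elim: m => [|m IH]; first by rewrite mul0r addr0 expr0.
have m_ge0 : 0 <= m%:R :> R by [].
by rewrite exprS -natr1; nra.
Qed.

Lemma exists_expr_lt (R : realType) (r C c : R) : 0 <= r -> r < 1 -> 0 < c ->
  exists m, r ^+ m * C < c.
Proof.
move=> r_ge0 r_lt1 c_gt0; have [C_le0|C_gt0] := lerP C 0.
  by exists 0%N; rewrite mul1r (le_lt_trans C_le0).
have [->|r_neq0] := eqVneq r 0; first by exists 1%N; rewrite mul0r.
have r_gt0 : 0 < r by rewrite lt_def r_neq0.
pose h := r^-1 - 1.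
have h_gt0 : 0 < h by rewrite subr_gt0 invf_gt1.
have ch_gt0 : 0 < c * h by rewrite mulr_gt0.
pose m := Num.Def.archi_bound (C / (c * h)).
have m_big : C / (c * h) < m%:R by apply/archi_boundP/divr_ge0; rewrite ltW.
exists m; have rh : r * (1 + h) = 1 by rewrite /h addrC subrK divff ?gt_eqF.
have pow_gt0 : 0 < (1 + h) ^+ m by rewrite exprn_gt0 // ltr_wpDr ?ltW.
rewrite -(ltr_pM2r pow_gt0) mulrAC -exprMn rh expr1n mul1r.
rewrite ltr_pdivrMr // in m_big.
have := ler_wpM2l (ltW c_gt0) (bernoulli_ineq m (ltW h_gt0)); nra.
Qed.

Lemma exists_nat_nonroot (R : numDomainType) (p : {poly R}) :
  p != 0 -> exists j : nat, ~~ root p j.+1%:R.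
Proof.
move=> p_neq0; apply: contrapT => no_nonroot.
have all_roots j : root p j.+1%:R.
  by apply: contrapT => /negP nr; apply: no_nonroot; exists j.
pose rs := [seq j.+1%:R | j <- iota 0 (size p)] : seq R.
have rs_uniq : uniq rs.
  by rewrite map_inj_uniq ?iota_uniq // => i j /eqP; rewrite eqr_nat => /eqP [].
have rs_roots : all (root p) rs by apply/allP => _ /mapP [j _ ->].
by have := max_poly_roots p_neq0 rs_roots rs_uniq; rewrite size_map size_iota ltnn.
Qed.

(** * Discounted payoffs of cyclic sequences *)

(* Players and blocks are indexed by 'I_n with its group structure Z/nZ, so i + l
   is taken mod n. *)
Section Game.
Variables (R : realType) (N : nat) (A : 'I_N.+1 -> finType).
Variables (u : 'I_N.+1 -> prof A -> R) (a0 : prof A).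
Local Notation n := N.+1.
Implicit Types (d D : R) (T : nat) (mu : 'I_n -> R) (b : prof A).

Lemma exists_minimizer (f : prof A -> R) : exists a, forall b, f a <= f b.
Proof.
exists [arg min_(b < a0) f b]%O.
by case: (arg_minP f (erefl true : predT a0)) => a _ a_min b; apply: a_min.
Qed.

Lemma exists_maximizer (f : prof A -> R) : exists a, forall b, f b <= f a.
Proof.
exists [arg max_(b > a0) f b]%O.
by case: (arg_maxP f (erefl true : predT a0)) => a _ a_max b; apply: a_max.
Qed.

Definition cycw D (l : 'I_n) := geow D n l.

Definition block_avg d T (a : 'I_(n * T) -> prof A) (j i : 'I_n) :=
  \sum_(r < T) geow d T r * u i (a (blk_pos j r)).

Lemma cyc_idx_blk_pos T (k : 'I_(n * T)) (i l : 'I_n) (r : 'I_T) :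
  cyc_idx k (i * T + blk_pos l r) = blk_pos (i + l) r.
Proof.
apply: val_inj; rewrite /= addnA -mulnDl {1}(divn_eq (i + l) n) mulnDl -mulnA -addnA.
by rewrite modnMDl modn_small // (blk_pos_subproof (i + l) r).
Qed.

Lemma Ui_blocks d T (a : 'I_(n * T) -> prof A) i : 0 < d -> (0 < T)%N ->
  Ui u d a i = \sum_l cycw (d ^+ T) l * block_avg d a (i + l) i.
Proof.
move=> d_gt0 T_gt0; rewrite /Ui !big_blk_pos.
have powE (j : 'I_n) (r : 'I_T) : d ^+ blk_pos j r = (d ^+ T) ^+ j * d ^+ r.
  by rewrite exprD mulnC exprM.
under eq_bigr do under eq_bigr do rewrite cyc_idx_blk_pos powE.
have denE : \sum_(j < n) \sum_(r < T) d ^+ blk_pos j r =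
    (\sum_(j < n) (d ^+ T) ^+ j) * \sum_(r < T) d ^+ r.
  by rewrite mulr_suml; apply: eq_bigr => j _; rewrite mulr_sumr; apply: eq_bigr.
rewrite denE mulr_suml; apply: eq_bigr => l _.
rewrite /block_avg [RHS]mulr_sumr mulr_suml; apply: eq_bigr => r _.
rewrite /cycw /geow; field.
by rewrite !gt_eqF ?geom_sum_gt0 ?exprn_gt0.
Qed.

Definition block_const T (c : 'I_n -> prof A) : 'I_(n * T) -> prof A := c \o blk_idx.
Arguments block_const T c : clear implicits.

Definition cyc_pay D (c : 'I_n -> prof A) (i : 'I_n) :=
  \sum_l cycw D l * u i (c (i + l)).

Lemma Ui_block_const d T c : 0 < d -> (0 < T)%N ->
  Ui u d (block_const T c) = cyc_pay (d ^+ T) c.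
Proof.
move=> d_gt0 T_gt0; apply: funext => i; rewrite Ui_blocks //; apply: eq_bigr => l _.
rewrite /block_avg /block_const; under eq_bigr do rewrite /= blk_idx_pos.
by rewrite -mulr_suml geow_sum1 ?mul1r.
Qed.

Lemma cyc_pay_const D a : 0 < D -> cyc_pay D (fun=> a) = (fun i => u i a).
Proof.
by move=> D_gt0; apply: funext => i; rewrite /cyc_pay -mulr_suml geow_sum1 ?mul1r.
Qed.

Lemma co_sub_Fstar S : S `<=` Fstar u -> co S `<=` Fstar u.
Proof.
move=> sub _ [m [w [p [w_ge0 [w_sum1 [pS ->]]]]]] i; split.
- have [a a_min] := exists_minimizer (u i); exists a.
  by apply: convex_comb_ge => // k; have [[b /(le_trans (a_min b))]] := sub _ (pS k) i.
- have [a a_max] := exists_maximizer (u i); exists a.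
  by apply: convex_comb_le => // k; have [_ [b /le_trans]] := sub _ (pS k) i; apply.
Qed.

Lemma Ui_in_Fstar d T (a : 'I_(n * T) -> prof A) : 0 < d -> (0 < T)%N -> Fstar u (Ui u d a).
Proof.
move=> d_gt0 T_gt0 i; have nT_gt0 : (0 < n * T)%N by rewrite muln_gt0.
have UiE : Ui u d a i = \sum_(k < n * T) geow d (n * T) k * u i (a (cyc_idx k (i * T + k))).
  by rewrite /Ui mulr_suml; apply: eq_bigr => k _; rewrite mulrAC.
have w_ge0 k : 0 <= geow d (n * T) k by rewrite ltW ?geow_gt0.
have w_sum1 := geow_sum1 d_gt0 nT_gt0; rewrite UiE; split.
- have [b b_min] := exists_minimizer (u i); exists b.
  exact: convex_comb_ge.
- have [b b_max] := exists_maximizer (u i); exists b.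
  exact: convex_comb_le.
Qed.

Lemma F_sub_Fstar d T : 0 < d -> (0 < T)%N -> F u d T `<=` Fstar u.
Proof. by move=> d_gt0 T_gt0; apply: co_sub_Fstar => _ [a _ <-]; apply: Ui_in_Fstar. Qed.

Lemma V_sub_Fstar : V u `<=` Fstar u.
Proof. by apply: co_sub_Fstar => _ [a _ <-] i; split; exists a. Qed.

Lemma cyc_pay_gen d T c : 0 < d -> (0 < T)%N ->
  [set Ui u d a | a in [set: 'I_(n * T) -> prof A]] (cyc_pay (d ^+ T) c).
Proof. by move=> d_gt0 T_gt0; exists (block_const T c); rewrite ?Ui_block_const. Qed.

Lemma V_sub_F d T : 0 < d -> (0 < T)%N -> V u `<=` F u d T.
Proof.
move=> d_gt0 T_gt0; apply: co_sub_co => _ [a _ <-].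
by rewrite -(cyc_pay_const a (exprn_gt0 T d_gt0)); apply/sub_co/cyc_pay_gen.
Qed.

Lemma Ui_cyc_comb d T d' T' (p : 'I_n -> R) (a : 'I_(n * T') -> prof A) :
  0 < d' -> (0 < T')%N ->
  (forall l, cycw (d' ^+ T') l = \sum_s p s * cycw (d ^+ T) (l - s)) ->
  Ui u d' a = fun i => \sum_(z : 'I_n * {ffun 'I_n -> 'I_T'})
    (p z.1 * \prod_j geow d' T' (z.2 j)) *
    cyc_pay (d ^+ T) (fun j => a (blk_pos (j + z.1) (z.2 (j + z.1)))) i.
Proof.
move=> d'_gt0 T'_gt0 comb; apply: funext => i; rewrite Ui_blocks //.
under eq_bigr do rewrite comb mulr_suml.
rewrite exchange_big -(pair_bigA _ (fun s (f : {ffun 'I_n -> 'I_T'}) =>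
  p s * \prod_j geow d' T' (f j) *
  cyc_pay (d ^+ T) (fun j => a (blk_pos (j + s) (f (j + s)))) i)).
apply: eq_bigr => s _.
rewrite [LHS](sumr_shift _ s); under [LHS]eq_bigr do rewrite addrK.
have blockE (j : 'I_n) : block_avg d' a j i = \sum_(f : {ffun 'I_n -> 'I_T'})
    (\prod_k geow d' T' (f k)) * u i (a (blk_pos j (f j))).
  symmetry; apply: (sum_ffun_prod_marginal (q := fun (_ : 'I_n) (r : 'I_T') => geow d' T' r)).
  by move=> _; apply: geow_sum1.
under eq_bigr do rewrite blockE !mulr_sumr; rewrite exchange_big /=.
apply: eq_bigr => f _; rewrite /cyc_pay !mulr_sumr; apply: eq_bigr => l _.
by rewrite addrA; ring.
Qed.

Lemma F_sub_of_rot_comb d T d' T' (p : 'I_n -> R) :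
  0 < d -> (0 < T)%N -> 0 < d' -> (0 < T')%N ->
  (forall s, 0 <= p s) -> \sum_s p s = 1 ->
  (forall l, cycw (d' ^+ T') l = \sum_s p s * cycw (d ^+ T) (l - s)) ->
  F u d' T' `<=` F u d T.
Proof.
move=> d_gt0 T_gt0 d'_gt0 T'_gt0 p_ge0 p_sum1 comb.
apply: co_sub_co => _ [a _ <-]; rewrite (Ui_cyc_comb _ _ _ comb) //.
have w_ge0 r : 0 <= geow d' T' r by rewrite ltW ?geow_gt0.
apply: co_fin => [z||z]; last exact: cyc_pay_gen.
  by rewrite mulr_ge0 ?prodr_ge0.
rewrite -(pair_bigA _ (fun s (f : {ffun 'I_n -> 'I_T'}) => p s * \prod_j geow d' T' (f j))).
have W_sum1 : \sum_(f : {ffun 'I_n -> 'I_T'}) \prod_j geow d' T' (f j) = 1.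
  apply: (sum_ffun_prod1 (q := fun (_ : 'I_n) (r : 'I_T') => geow d' T' r)).
  by move=> _; apply: geow_sum1.
by under eq_bigr do rewrite -mulr_sumr W_sum1 mulr1.
Qed.

(** * Support functions *)

Definition lin_pay mu b := \sum_i mu i * u i b.

Definition tilt (w : 'I_n -> R) j mu : 'I_n -> R := fun i => w (j - i) * mu i.

Definition best w mu j := [arg max_(b > a0) lin_pay (tilt w j mu) b]%O.

Lemma best_max w mu j b : lin_pay (tilt w j mu) b <= lin_pay (tilt w j mu) (best w mu j).
Proof. by rewrite /best; case: arg_maxP => // a _; apply. Qed.

Definition supp w mu := \sum_j lin_pay (tilt w j mu) (best w mu j).

Lemma dot_Ui d T (a : 'I_(n * T) -> prof A) mu : 0 < d -> (0 < T)%N ->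
  \sum_i mu i * Ui u d a i =
  \sum_j \sum_(r < T) geow d T r * lin_pay (tilt (cycw (d ^+ T)) j mu) (a (blk_pos j r)).
Proof.
move=> d_gt0 T_gt0.
under eq_bigr => i _ do rewrite Ui_blocks // (sumr_shift _ (- i)) mulr_sumr.
rewrite exchange_big; apply: eq_bigr => j _ /=.
under [RHS]eq_bigr do rewrite /lin_pay mulr_sumr; rewrite [RHS]exchange_big.
apply: eq_bigr => i _; rewrite [i + _]addrC subrK /block_avg !mulr_sumr.
by apply: eq_bigr => r _; rewrite /tilt; ring.
Qed.

Lemma dot_Ui_le_supp d T (a : 'I_(n * T) -> prof A) mu : 0 < d -> (0 < T)%N ->
  \sum_i mu i * Ui u d a i <= supp (cycw (d ^+ T)) mu.
Proof.
move=> d_gt0 T_gt0; rewrite dot_Ui //; apply: ler_sum => j _.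
by apply: convex_comb_le => [r||r]; rewrite ?geow_sum1 ?best_max ?ltW ?geow_gt0.
Qed.

Lemma dot_Ui_block_const_best d T mu : 0 < d -> (0 < T)%N ->
  \sum_i mu i * Ui u d (block_const T (best (cycw (d ^+ T)) mu)) i = supp (cycw (d ^+ T)) mu.
Proof.
move=> d_gt0 T_gt0; rewrite dot_Ui //; apply: eq_bigr => j _.
by under eq_bigr do rewrite /block_const /= blk_idx_pos; rewrite -mulr_suml geow_sum1 ?mul1r.
Qed.

Lemma F_le_supp d T mu x : 0 < d -> (0 < T)%N ->
  F u d T x -> \sum_i mu i * x i <= supp (cycw (d ^+ T)) mu.
Proof. by move=> d_gt0 T_gt0; apply: co_le_linear => _ [a _ <-]; apply: dot_Ui_le_supp. Qed.

Lemma supp_le_of_F_sub d T d' T' mu : 0 < d -> (0 < T)%N -> 0 < d' -> (0 < T')%N ->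
  F u d T `<=` F u d' T' -> supp (cycw (d ^+ T)) mu <= supp (cycw (d' ^+ T')) mu.
Proof.
move=> d_gt0 T_gt0 d'_gt0 T'_gt0 sub; rewrite -(dot_Ui_block_const_best mu d_gt0 T_gt0).
by apply/F_le_supp/sub/sub_co => //; eexists.
Qed.

Definition common_best w :=
  forall mu, exists a, forall j b, lin_pay (tilt w j mu) b <= lin_pay (tilt w j mu) a.

Lemma lin_pay_tilt_comb w w' (p : 'I_n -> R) mu j b :
  (forall l, w' l = \sum_s p s * w (l - s)) ->
  lin_pay (tilt w' j mu) b = \sum_s p s * lin_pay (tilt w (j - s) mu) b.
Proof.
move=> comb; rewrite /lin_pay /tilt; under eq_bigr do rewrite comb !mulr_suml.
rewrite exchange_big; apply: eq_bigr => s _; rewrite mulr_sumr; apply: eq_bigr => i _.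
by rewrite addrAC; ring.
Qed.

Lemma common_best_of_supp_le w w' (p : 'I_n -> R) :
  (forall s, 0 < p s) -> \sum_s p s = 1 -> (forall l, w' l = \sum_s p s * w (l - s)) ->
  (forall mu, supp w mu <= supp w' mu) -> common_best w.
Proof.
move=> p_gt0 p_sum1 comb supp_le mu; exists (best w' mu 0) => k b.
(* Both supports are p-averages of the rotated tilts; equality forces every gap to vanish. *)
pose gap s j := lin_pay (tilt w (j - s) mu) (best w mu (j - s)) -
                lin_pay (tilt w (j - s) mu) (best w' mu j).
have gap_ge0 s j : 0 <= gap s j by rewrite subr_ge0 best_max.
have gapE : \sum_s p s * \sum_j gap s j = supp w mu - supp w' mu.
  under eq_bigr do rewrite sumrB mulrBr; rewrite sumrB; congr (_ - _).
    transitivity (\sum_s p s * supp w mu); last by rewrite -mulr_suml p_sum1 mul1r.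
    by apply: eq_bigr => s _; rewrite /supp [in RHS](sumr_shift _ (- s)).
  rewrite /supp; under [RHS]eq_bigr do rewrite (lin_pay_tilt_comb _ _ _ comb).
  by rewrite exchange_big; apply: eq_bigr => s _; rewrite mulr_sumr.
have terms_ge0 s : 0 <= p s * \sum_j gap s j by rewrite mulr_ge0 ?sumr_ge0 // ltW.
have sum0 : \sum_s p s * \sum_j gap s j = 0.
  by apply/eqP; rewrite eq_le {1}gapE subr_le0 supp_le sumr_ge0.
have gap0 s j : gap s j = 0.
  move: (psumr_eq0P (fun s _ => terms_ge0 s) sum0 (i := s) isT) => /eqP.
  rewrite mulf_eq0 gt_eqF //= => /eqP sum_s0.
  exact: (psumr_eq0P (fun j _ => gap_ge0 s j) sum_s0 (i := j) isT).
move: (gap0 (- k) 0); rewrite /gap sub0r opprK => /eqP; rewrite subr_eq0 => /eqP <-.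
exact: best_max.
Qed.

(** * Corners of F* *)

Definition strict_best mu a :=
  forall b, [exists i, u i b != u i a] -> lin_pay mu b < lin_pay mu a.

Lemma strict_best_le mu a b : strict_best mu a -> lin_pay mu b <= lin_pay mu a.
Proof.
move=> best_a; have [/best_a/ltW //|] := boolP [exists i, u i b != u i a].
rewrite negb_exists => /forallP same; suff -> : lin_pay mu b = lin_pay mu a by [].
by apply: eq_bigr => i _; rewrite (eqP (negbNE (same i))).
Qed.

Lemma lin_payD mu nu e b :
  lin_pay (fun i => mu i + e * nu i) b = lin_pay mu b + e * lin_pay nu b.
Proof. by rewrite /lin_pay mulr_sumr -big_split; apply: eq_bigr => i _ /=; ring. Qed.

Lemma strict_best_perturb mu nu a : strict_best mu a ->
  exists2 e, 0 < e & strict_best (fun i => mu i + e * nu i) a.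
Proof.
move=> best_a.
pose margin b := if [exists i, u i b != u i a] then lin_pay mu a - lin_pay mu b else 1.
have margin_gt0 b : 0 < margin b.
  by rewrite /margin; case: ifP => // /best_a; rewrite subr_gt0.
have [bm bm_min] := exists_minimizer margin.
pose K := 1 + \sum_b `|lin_pay nu b - lin_pay nu a|.
have K_gt0 : 0 < K by rewrite ltr_wpDr ?sumr_ge0.
pose e := margin bm / K.
have e_gt0 : 0 < e by rewrite divr_gt0.
exists e => // b b_ne; rewrite !lin_payD -subr_gt0.
have nu_le : lin_pay nu b - lin_pay nu a <= K - 1.
  rewrite (le_trans (ler_norm _)) // /K [1 + _]addrC addrK (bigD1 b) //= lerDl.
  exact: sumr_ge0.
have := ler_wpM2l (ltW e_gt0) nu_le.
have eK : e * (K - 1) = margin bm - e by rewrite /e; field; rewrite gt_eqF.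
have := bm_min b; rewrite {2}/margin b_ne eK; lra.
Qed.

Lemma generic_strict_best (sigma : 'I_n -> bool) :
  exists mu a, strict_best mu a /\ forall k, if sigma k then 0 < mu k else mu k < 0.
Proof.
pose sg k : R := if sigma k then 1 else -1.
have sg_neq0 k : sg k != 0 by rewrite /sg; case: (sigma k); rewrite ?oppr_eq0 oner_eq0.
pose differ (ab : prof A * prof A) := [exists i, u i ab.1 != u i ab.2].
pose P (ab : prof A * prof A) : {poly R} :=
  \poly_(i < n) (sg (inord i) * (u (inord i) ab.1 - u (inord i) ab.2)).
have P_neq0 ab : differ ab -> P ab != 0.
  case/existsP => i ne_i; apply/eqP => /(congr1 (fun q : {poly R} => q`_i)) /eqP.
  rewrite coef_poly ltn_ord inord_val coef0 mulf_eq0 (negbTE (sg_neq0 i)) subr_eq0.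
  by rewrite (negbTE ne_i).
(* Outside the roots of Q, lin_pay mu separates profiles with distinct payoff vectors. *)
have Q_neq0 : \prod_(ab | differ ab) P ab != 0 by apply/prodf_neq0 => ab; apply: P_neq0.
have [j] := exists_nat_nonroot Q_neq0; set t : R := j.+1%:R.
rewrite /root horner_prod => /prodf_neq0 P_t_neq0.
pose mu i := sg i * t ^+ i.
have P_eval ab : (P ab).[t] = lin_pay mu ab.1 - lin_pay mu ab.2.
  by rewrite horner_poly /lin_pay -sumrB; apply: eq_bigr => i _; rewrite inord_val /mu; ring.
have [a a_max] := exists_maximizer (lin_pay mu).
exists mu, a; split=> [b b_ne|k].
  have := P_t_neq0 (b, a) b_ne; rewrite P_eval subr_eq0 => ne_ba.
  by rewrite lt_def eq_sym ne_ba a_max.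
have t_gt0 : 0 < t by rewrite ltr0n.
by rewrite /mu /sg; case: (sigma k); rewrite ?mul1r ?mulN1r ?oppr_lt0 exprn_gt0.
Qed.

Definition corner (sigma : 'I_n -> bool) a :=
  forall k b, if sigma k then u k b <= u k a else u k a <= u k b.

Section Corners.
Variables (w : 'I_n -> R) (rho : R).
Hypotheses (w_gt0 : forall l, 0 < w l) (w_sum1 : \sum_l w l = 1).
Hypotheses (rho_ge0 : 0 <= rho) (rho_lt1 : rho < 1).
Hypothesis w_le : forall l, l != 0 -> w l <= rho * w 0.
Hypothesis w_best : common_best w.

Lemma sum_lin_pay_tilt mu b : \sum_j lin_pay (tilt w j mu) b = lin_pay mu b.
Proof.
rewrite /lin_pay exchange_big; apply: eq_bigr => i _ /=.
under eq_bigr do rewrite /tilt -mulrA; rewrite -mulr_suml (sumr_shift _ i).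
by under eq_bigr do rewrite addrK; rewrite w_sum1 mul1r.
Qed.

Lemma strict_best_tilt mu a k : strict_best mu a -> strict_best (tilt w k mu) a.
Proof.
move=> best_a b b_ne; rewrite ltNge; apply/negP => b_ge.
(* Perturbing mu towards b keeps a the unique best, so a common best for the perturbed
   direction has the payoffs of a, which b beats in the k-th tilted functional. *)
pose nu i := (u i b - u i a) / w (k - i).
have [e e_gt0 best_a'] := strict_best_perturb nu best_a.
set mu' := fun i => mu i + e * nu i in best_a'.
have [a' a'_best] := w_best mu'.
have same_a' i : u i a' = u i a.
  have : ~~ [exists i, u i a' != u i a].
    apply/negP => /best_a'; rewrite ltNge -!sum_lin_pay_tilt => /negP; apply.
    by apply: ler_sum => j _; apply: a'_best.
  by rewrite negb_exists => /forallP/(_ i)/negbNE/eqP.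
have tiltE x : lin_pay (tilt w k mu') x =
    lin_pay (tilt w k mu) x + e * \sum_i (u i b - u i a) * u i x.
  rewrite /lin_pay mulr_sumr -big_split; apply: eq_bigr => i _ /=.
  by rewrite /tilt /mu' /nu; field; rewrite gt_eqF.
have sq_gt0 : 0 < \sum_i (u i b - u i a) * (u i b - u i a).
  case/existsP: b_ne => i ne_i; rewrite (bigD1 i) //= ltr_pwDl ?sumr_ge0 // => [|j _].
    by rewrite -expr2 exprn_even_gt0 // subr_eq0.
  by rewrite -expr2 sqr_ge0.
have := a'_best k b; rewrite !tiltE.
have -> : \sum_i (u i b - u i a) * u i a' = \sum_i (u i b - u i a) * u i a.
  by apply: eq_bigr => i _; rewrite same_a'.
have -> : lin_pay (tilt w k mu) a' = lin_pay (tilt w k mu) a.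
  by apply: eq_bigr => i _; rewrite same_a'.
have sqE : \sum_i (u i b - u i a) * (u i b - u i a) =
    \sum_i (u i b - u i a) * u i b - \sum_i (u i b - u i a) * u i a.
  by rewrite -sumrB; apply: eq_bigr => i _; ring.
rewrite sqE in sq_gt0; have := mulr_gt0 e_gt0 sq_gt0; nra.
Qed.

Lemma iter_tilt m k mu : iter m (tilt w k) mu = fun i => w (k - i) ^+ m * mu i.
Proof.
elim: m => [|m IH] /=; apply: funext => i; first by rewrite expr0 mul1r.
by rewrite IH /tilt exprS mulrA.
Qed.

Lemma tilt_limit mu a k :
  (forall m b, lin_pay (iter m (tilt w k) mu) b <= lin_pay (iter m (tilt w k) mu) a) ->
  forall b, mu k * u k b <= mu k * u k a.
Proof.
move=> best_m b; rewrite leNgt; apply/negP => lt_ab.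
pose e i := mu i * (u i b - u i a).
have e_k_gt0 : 0 < e k by rewrite /e mulrBr subr_gt0.
pose C := \sum_i `|e i|.
have [m small] := exists_expr_lt C rho_ge0 rho_lt1 e_k_gt0.
have := best_m m b; apply/negP; rewrite -ltNge -subr_gt0 iter_tilt.
have -> : lin_pay (fun i => w (k - i) ^+ m * mu i) b -
    lin_pay (fun i => w (k - i) ^+ m * mu i) a = \sum_i w (k - i) ^+ m * e i.
  by rewrite /lin_pay -sumrB; apply: eq_bigr => i _; rewrite /e; ring.
rewrite (bigD1 k) //= subrr.
(* Player i != k has weight w (k - i) ^+ m <= W, negligible against w 0 ^+ m. *)
pose W := w 0 ^+ m * rho ^+ m.
have W_ge0 : 0 <= W by rewrite mulr_ge0 ?exprn_ge0 // ltW.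
have term i : i != k -> - (W * `|e i|) <= w (k - i) ^+ m * e i.
  move=> ne_ik; have w_ki_ge0 : 0 <= w (k - i) ^+ m by rewrite exprn_ge0 // ltW.
  have pow_le : w (k - i) ^+ m <= W.
    rewrite /W -exprMn mulrC lerXn2r ?nnegrE ?mulr_ge0 ?(ltW (w_gt0 _)) //.
    by apply: w_le; rewrite subr_eq0 eq_sym.
  apply: lerNnormlW; rewrite normrM ger0_norm //.
  by rewrite ler_wpM2r.
have others : - (W * C) <= \sum_(i | i != k) w (k - i) ^+ m * e i.
  apply: le_trans (ler_sum _ term); rewrite sumrN -mulr_sumr lerN2 ler_wpM2l //.
  by rewrite /C [leRHS](bigD1 k) //= lerDr.
have : 0 < w 0 ^+ m * (e k - rho ^+ m * C).
  by rewrite mulr_gt0 ?exprn_gt0 // subr_gt0.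
rewrite /W in others; nra.
Qed.

Lemma corner_exists sigma : exists a, corner sigma a.
Proof.
have [mu [a [best_a signs]]] := generic_strict_best sigma.
have best_iter m k : strict_best (iter m (tilt w k) mu) a.
  by elim: m => //= m IH; apply: strict_best_tilt.
exists a => k b; have := tilt_limit (fun m b => strict_best_le b (best_iter m k)) b.
by move: (signs k); case: (sigma k) => sgn; [rewrite ler_pM2l | rewrite ler_nM2l].
Qed.

End Corners.

Lemma Fstar_sub_V : (forall sigma, exists a, corner sigma a) -> Fstar u `<=` V u.
Proof.
move=> corners x Fx.
have [c c_corner] := choice (fun sigma : {ffun 'I_n -> bool} => corners sigma).
pose M k := u k (c [ffun=> true]); pose m k := u k (c [ffun=> false]).
have c_val sigma k : u k (c sigma) = if sigma k then M k else m k.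
  have := c_corner [ffun=> true] k; have := c_corner [ffun=> false] k.
  rewrite /M /m !ffunE; have := c_corner sigma k.
  by case: (sigma k) => c_sigma c_false c_true; apply/le_anti; rewrite c_sigma ?c_true ?c_false.
pose param k tk := 0 <= tk <= 1 /\ x k = tk * M k + (1 - tk) * m k.
have [t t_param] : {t : 'I_n -> R & forall k, param k (t k)}.
  apply: choice => k; have [[a a_le] [b le_b]] := Fx k.
  have m_le : m k <= x k.
    by apply: le_trans a_le; have := c_corner [ffun=> false] k a; rewrite ffunE.
  have le_M : x k <= M k.
    by apply: le_trans le_b _; have := c_corner [ffun=> true] k b; rewrite ffunE.
  by have [tk ? ?] := segment_param m_le le_M; exists tk.
(* x is the expected payoff of the corner c sigma when each sigma k is drawn independently,
   true with probability t k. *)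
pose q k (bit : bool) := if bit then t k else 1 - t k.
have q_sum1 k : \sum_bit q k bit = 1 by rewrite big_bool /q /= addrC subrK.
have -> : x = fun i => \sum_(sigma : {ffun 'I_n -> bool})
    (\prod_k q k (sigma k)) * u i (c sigma).
  apply: funext => i; under eq_bigr do rewrite c_val.
  rewrite (sum_ffun_prod_marginal q_sum1 (fun bit => if bit then M i else m i)).
  by rewrite big_bool /q /=; have [_ ->] := t_param i.
apply: co_fin => [sigma||sigma]; last by exists (c sigma).
  apply: prodr_ge0 => k _; have [/andP [t_ge0 t_le1] _] := t_param k.
  by rewrite /q; case: ifP; rewrite ?subr_ge0.
exact: sum_ffun_prod1.
Qed.

Lemma F_sub_of_lt d T d' T' : 0 < d -> (0 < T)%N -> 0 < d' <= 1 -> (0 < T')%N ->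
  d ^+ T < d' ^+ T' -> F u d' T' `<=` F u d T.
Proof.
move=> d_gt0 T_gt0 /andP [d'_gt0 d'_le1] T'_gt0 lt_DD'.
have [p [p_gt0 p_sum1 comb]] :=
  geow_rot_comb N (exprn_gt0 T d_gt0) lt_DD' (exprn_ile1 T' (ltW d'_gt0) d'_le1).
by apply: (F_sub_of_rot_comb _ _ _ _ _ _ comb) => // s; apply: ltW.
Qed.

Lemma Fstar_sub_V_of_F_sub d T d' T' : 0 < d -> (0 < T)%N -> 0 < d' <= 1 -> (0 < T')%N ->
  d ^+ T < d' ^+ T' -> F u d T `<=` F u d' T' -> Fstar u `<=` V u.
Proof.
move=> d_gt0 T_gt0 /andP [d'_gt0 d'_le1] T'_gt0 lt_DD' sub.
have D_gt0 := exprn_gt0 T d_gt0; have D'_le1 := exprn_ile1 T' (ltW d'_gt0) d'_le1.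
have [p [p_gt0 p_sum1 comb]] := geow_rot_comb N D_gt0 lt_DD' D'_le1.
have best := common_best_of_supp_le p_gt0 p_sum1 comb
  (fun mu => supp_le_of_F_sub mu d_gt0 T_gt0 d'_gt0 T'_gt0 sub).
apply: Fstar_sub_V => sigma; apply: (corner_exists (w := cycw (d ^+ T)) (rho := d ^+ T)).
- by move=> l; apply: geow_gt0.
- exact: geow_sum1.
- exact: ltW D_gt0.
- exact: lt_le_trans lt_DD' D'_le1.
- by move=> l l_neq0; rewrite geow_le ?D_gt0 ?lt0n // (le_trans (ltW lt_DD')).
- exact: best.
Qed.

End Game.

Theorem proposition1 (R : realType) (n : nat) (A : 'I_n -> finType)
  (u : 'I_n -> prof A -> R) :
  (2 <= n)%N -> (forall i, (0 < #|A i|)%N) ->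
  (V u <> Fstar u ->
     forall (delta delta' : R) (T T' : nat),
       0 < delta <= 1 -> 0 < delta' <= 1 -> (0 < T)%N -> (0 < T')%N ->
       delta ^+ T < delta' ^+ T' ->
       F u delta' T' `<` F u delta T) /\
  (V u = Fstar u ->
     forall (delta : R) (T : nat), 0 < delta <= 1 -> (0 < T)%N ->
       F u delta T = V u).
Proof.
case: n A u => [//|N] A u _ A_ne.
pose a0 : prof A := [ffun i => enum_val (Ordinal (A_ne i))].
split=> [V_neq d d' T T' /andP [d_gt0 _] d'_range T_gt0 T'_gt0 lt_DD'
        | V_eq d T /andP [d_gt0 _] T_gt0].
  split; first exact: F_sub_of_lt.
  move=> sub; apply: V_neq; apply/seteqP; split; first exact: (V_sub_Fstar a0).
  exact: (Fstar_sub_V_of_F_sub a0 d_gt0 T_gt0 d'_range T'_gt0 lt_DD' sub).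
apply/seteqP; split; last exact: V_sub_F.
by rewrite V_eq; apply: (F_sub_Fstar a0).
Qed.
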